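(* Let $G=(V,E,\boldsymbol{X})$ be a connected graph with at least two nodes, node features $\boldsymbol{x}_v\in\mathbb{R}^d$, a finite label set $\mathcal{Y}=\{1,\dots,|\mathcal{Y}|\}$, a nonempty set $V_{\text{train}}\subset V$ of labeled nodes with one-hot labels $\boldsymbol{y}_v$, and $V_{\text{test}}=V\setminus V_{\text{train}}$. Consider the TFGNN with $L$ layers $$\boldsymbol{h}^{(0)}_v=[\boldsymbol{x}_v;\tilde{\boldsymbol{y}}_v],$$ $$\boldsymbol{h}^{(l)}_v=\begin{cases}\mathrm{ReLU}\big(\boldsymbol{S}^{(l)}\boldsymbol{h}^{(l-1)}_v+\frac{1}{|\mathcal{N}(v)|}\sum_{u\in\mathcal{N}(v)}\boldsymbol{V}^{(l)}\boldsymbol{h}^{(l-1)}_u\big) & (v\in V_{\text{train}}),\\ \mathrm{ReLU}\big(\boldsymbol{T}^{(l)}\boldsymbol{h}^{(l-1)}_v+\frac{1}{|\mathcal{N}(v)|}\sum_{u\in\mathcal{N}(v)}\boldsymbol{W}^{(l)}\boldsymbol{h}^{(l-1)}_u\big) & (v\in V_{\text{test}}),\end{cases}\quad l\in[L],$$ $$\hat{\boldsymbol{y}}_v=\mathrm{softmax}(\boldsymbol{U}\boldsymbol{h}^{(L)}_v),$$ where, with $m=1+|\mathcal{Y}|$, the parameters satisfy for all $l\in[L]$: $\boldsymbol{S}^{(l)}_{-m:,:-m}=0$, $\boldsymbol{S}^{(l)}_{-m:,-m:}=\boldsymbol{I}_m$, $\boldsymbol{V}^{(l)}_{-m:}=0$,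 $\boldsymbol{T}^{(l)}_{-m:}=0$, $\boldsymbol{W}^{(l)}_{-m:,:-m}=0$, $\boldsymbol{W}^{(l)}_{-m:,-m:}=\boldsymbol{I}_m$, and $\boldsymbol{U}_{:,:-|\mathcal{Y}|}=0$, $\boldsymbol{U}_{:,-|\mathcal{Y}|:}=\boldsymbol{I}_{|\mathcal{Y}|}$, all other entries being arbitrary. Then for every $v\in V$ and $i\in\mathcal{Y}$, $$\boldsymbol{h}^{(L)}_{v,-(|\mathcal{Y}|-i+1)}=p_{L,v,i},\qquad \operatorname{argmax}_i\hat{\boldsymbol{y}}_{vi}=\operatorname{argmax}_i p_{L,v,i},$$ and, for $v\in V_{\text{test}}$, $p_{L,v,i}\to\hat{\boldsymbol{y}}^{\text{LP}}_{v,i}$ as $L\to\infty$.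
   Context: Numpy-like indexing: for a matrix $\boldsymbol{M}$, $\boldsymbol{M}_{-m:,:}$ (written $\boldsymbol{M}_{-m:}$) is its last $m$ rows, $\boldsymbol{M}_{:,-m:}$ its last $m$ columns, $\boldsymbol{M}_{:,:-m}$ all columns except the last $m$, and $\boldsymbol{h}_{-j}$ is the $j$-th entry from the end of a vector $\boldsymbol{h}$. $\mathcal{N}(v)$ is the set of neighbors of $v$. The label feature is $\tilde{\boldsymbol{y}}_v=[1;\boldsymbol{y}_v]$ for $v\in V_{\text{train}}$ and $\tilde{\boldsymbol{y}}_v=\mathbf{0}_{1+|\mathcal{Y}|}$ for $v\in V_{\text{test}}$, so $\boldsymbol{h}^{(0)}_v\in\mathbb{R}^{d+1+|\mathcal{Y}|}$; each $\boldsymbol{h}^{(l)}_v\in\mathbb{R}^{D_l}$ with $D_0=d+1+|\mathcal{Y}|$ and $D_l\ge 1+|\mathcal{Y}|$, the matrices $\boldsymbol{S}^{(l)},\boldsymbol{T}^{(l)},\boldsymbol{V}^{(l)},\boldsymbol{W}^{(l)}\in\mathbb{R}^{D_l\times D_{l-1}}$ and $\boldsymbol{U}\in\mathbb{R}^{|\mathcal{Y}|\times D_L}$. The one-hot vector $\boldsymbol{y}_v$ has its $i$-th coordinate equal to $1$ iff $v$ has label $i$. Define $p_{l,v,i}$ as the probability that a simple random walk started at $v$ (each step moves to a uniformly random neighbor) hits $V_{\text{train}}$ within $l$ steps and the first node of $V_{\text{train}}$ it hits has label $i$ (so $p_{l,v,i}=1[i=\text{label of } v]$ for $v\in V_{\text{train}}$).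 Label propagation output: $\hat{\boldsymbol{y}}^{\text{LP}}_{v,i}$ is the probability that the first node of $V_{\text{train}}$ hit by a simple random walk from $v$ has label $i$. *)

From HB Require Import structures.
From mathcomp Require Import all_boot all_order all_algebra.
From mathcomp Require Import all_classical all_reals all_analysis.
Set Implicit Arguments. Unset Strict Implicit. Unset Printing Implicit Defensive.
Import Order.TTheory GRing.Theory Num.Theory.
Import numFieldNormedType.Exports.
Local Open Scope ring_scope.

Section TFGNN.
Variables (R : realType) (V : finType) (adj : rel V).

Definition nbrs (v : V) : {set V} := [set u | adj v u].

Definition simple_connected_graph : Prop :=
  [/\ symmetric adj, irreflexive adj, (forall u v, connect adj u v) & 1 < #|V|]%N.

Definition relu n (z : 'cV[R]_n) : 'cV[R]_n := map_mx (fun a => Num.max a 0) z.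
Definition softmax n (z : 'cV[R]_n) : 'cV[R]_n :=
  \col_i (expR (z i 0) / \sum_j expR (z j 0)).

Definition mean_nbr p q (M : 'M[R]_(p, q)) (h : V -> 'cV[R]_q) (v : V) : 'cV[R]_p :=
  (#|nbrs v|%:R)^-1 *: \sum_(u in nbrs v) (M *m h u).

Variables (K : nat) (Vtrain : {set V}) (lab : V -> 'I_K).

Definition onehot (c : 'I_K) : 'cV[R]_K := \col_i (i == c)%:R.
Definition label_feat (v : V) : 'cV[R]_(1 + K) :=
  if v \in Vtrain then col_mx 1 (onehot (lab v)) else 0.

(* Layer widths: D_l = e l + (1 + K), with D_0 = d + 1 + |Y| where d = e 0.
   Layer l+1 (l : nat) uses S l, V l, T l, W l : 'M_(D_(l+1), D_l). *)
Variables (e : nat -> nat) (x : V -> 'cV[R]_(e 0%N))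
  (S Vw T W : forall l : nat, 'M[R]_(e l.+1 + (1 + K), e l + (1 + K))).

Fixpoint tfgnn (l : nat) : V -> 'cV[R]_(e l + (1 + K)) :=
  match l return V -> 'cV[R]_(e l + (1 + K)) with
  | 0%N => fun v => col_mx (x v) (label_feat v)
  | l'.+1 => fun v =>
      relu (if v \in Vtrain
            then S l' *m tfgnn l' v + mean_nbr (Vw l') (tfgnn l') v
            else T l' *m tfgnn l' v + mean_nbr (W l') (tfgnn l') v)
  end.

End TFGNN.

Section RandomWalk.
Variables (R : realType) (V : finType) (adj : rel V).
Variables (K : nat) (Vtrain : {set V}) (lab : V -> 'I_K).

Definition trans (u w : V) : R := if adj u w then (#|nbrs adj u|%:R)^-1 else 0.

Definition walk_prob l (w : {ffun 'I_l.+1 -> V}) : R :=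
  \prod_(j < l) trans (w (widen_ord (leqnSn l) j)) (w (lift ord0 j)).

Definition first_hit_label l (w : {ffun 'I_l.+1 -> V}) (i : 'I_K) : bool :=
  [exists k : 'I_l.+1, [&& w k \in Vtrain,
     [forall j : 'I_l.+1, (j < k)%N ==> (w j \notin Vtrain)] & lab (w k) == i]].

Definition p_hit (l : nat) (v : V) (i : 'I_K) : R :=
  \sum_(w : {ffun 'I_l.+1 -> V} | (w ord0 == v) && first_hit_label w i) walk_prob w.

Definition hit_exactly (k : nat) (v : V) (i : 'I_K) : R :=
  \sum_(w : {ffun 'I_k.+1 -> V} | [&& w ord0 == v,
        [forall j : 'I_k.+1, (j < k)%N ==> (w j \notin Vtrain)],
        w ord_max \in Vtrain & lab (w ord_max) == i]) walk_prob w.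

(* label propagation output: probability that the first node of Vtrain hit
   by the (infinite) random walk from v has label i, computed by
   sigma-additivity over the (disjoint) events {first hitting time = k} *)
Definition lp_output (v : V) (i : 'I_K) : R := limn (series (fun k => hit_exactly k v i)).

End RandomWalk.

From HB Require Import structures.
From mathcomp Require Import all_boot all_order all_algebra.
From mathcomp Require Import all_classical all_reals all_analysis.
From mathcomp Require Import lra.
Import Order.TTheory GRing.Theory Num.Theory.
Import numFieldNormedType.Exports.
Local Open Scope ring_scope.
Set Implicit Arguments. Unset Strict Implicit. Unset Printing Implicit Defensive.

(* Under the parameter constraints, the last 1 + |Y| coordinates of a layer
   only see the same coordinates of the previous layer: a training node keeps
   its block [1; y_v] and a test node replaces its block by the mean of its
   neighbours' blocks.  By first-step analysis of the random walk, p_{l,v,i}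
   satisfies exactly this recursion, and the ReLU is inert because all these
   entries are probabilities.  U reads off the label block and softmax is
   monotone, which gives the argmax claim.  Finally p_{l,v,i} is the l-th
   partial sum of the probabilities that the walk first hits V_train at time k
   at a node of label i: a nondecreasing sequence bounded by 1 whose limit is
   the label-propagation output. *)

Section Trajectories.
Variable V : finType.

Definition fcons n (a : V) (t : {ffun 'I_n -> V}) : {ffun 'I_n.+1 -> V} :=
  [ffun j => if unlift ord0 j is Some j' then t j' else a].

Definition fbehead n (w : {ffun 'I_n.+1 -> V}) : {ffun 'I_n -> V} :=
  [ffun j => w (lift ord0 j)].

Lemma fcons0 n a (t : {ffun 'I_n -> V}) : fcons a t ord0 = a.
Proof. by rewrite ffunE unlift_none. Qed.

Lemma fcons_lift n a (t : {ffun 'I_n -> V}) j : fcons a t (lift ord0 j) = t j.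
Proof. by rewrite ffunE liftK. Qed.

Lemma fconsK n a (t : {ffun 'I_n -> V}) : fbehead (fcons a t) = t.
Proof. by apply/ffunP => j; rewrite ffunE fcons_lift. Qed.

Lemma fbeheadK n (w : {ffun 'I_n.+1 -> V}) : fcons (w ord0) (fbehead w) = w.
Proof.
apply/ffunP => j; case: (unliftP ord0 j) => [j'|] ->; last by rewrite fcons0.
by rewrite fcons_lift ffunE.
Qed.

Lemma big_ffunS (M : nmodType) n (F : {ffun 'I_n.+1 -> V} -> M) :
  \sum_w F w = \sum_a \sum_(t : {ffun 'I_n -> V}) F (fcons a t).
Proof.
rewrite pair_big /= (reindex (fun pr : V * _ => fcons pr.1 pr.2)) //=.
apply: onW_bij; exists (fun w : {ffun _ -> V} => (w ord0, fbehead w)) => [[a t]|w] /=.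
  by rewrite fcons0 fconsK.
by rewrite fbeheadK.
Qed.

Lemma big_ffun0 (M : nmodType) (F : {ffun 'I_0 -> V} -> M) t0 :
  \sum_t F t = F t0.
Proof.
have all_t0 t : t = t0 by apply/ffunP => -[].
by rewrite (big_pred1 t0) // => t; rewrite /= (all_t0 t) eqxx.
Qed.

End Trajectories.

Section FirstHit.
Variables (V : finType) (K : nat) (Vtrain : {set V}) (lab : V -> 'I_K).

Lemma first_hit_label_train l (w : {ffun 'I_l.+1 -> V}) i :
  w ord0 \in Vtrain -> first_hit_label Vtrain lab w i = (lab (w ord0) == i).
Proof.
move=> w0_train; apply/existsP/idP => [[k /and3P [_ /forallP before lab_k]]|lab0].
  have [k0|k_gt0] := posnP k; last by move: (before ord0); rewrite k_gt0 w0_train.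
  suff -> : ord0 = k by [].
  by apply: val_inj; rewrite /= k0.
by exists ord0; rewrite w0_train lab0 andbT; apply/forallP.
Qed.

Lemma first_hit_label_behead l (w : {ffun 'I_l.+2 -> V}) i :
  w ord0 \notin Vtrain ->
  first_hit_label Vtrain lab w i = first_hit_label Vtrain lab (fbehead w) i.
Proof.
move=> w0_test; apply/existsP/existsP => -[k /and3P [k_train /forallP before lab_k]].
  case: (unliftP ord0 k) => [k'|] Ek; last by rewrite Ek (negbTE w0_test) in k_train.
  exists k'; rewrite !ffunE -Ek k_train lab_k andbT.
  apply/forallP => j; apply/implyP => lt_jk; rewrite ffunE.
  by move: (before (lift ord0 j)); rewrite Ek !lift0 ltnS lt_jk.
rewrite !ffunE in k_train lab_k.
exists (lift ord0 k); rewrite k_train lab_k andbT.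
apply/forallP => j; apply/implyP; case: (unliftP ord0 j) => [j'|] -> //.
rewrite !lift0 ltnS => lt_jk.
by move/implyP: (before j') => /(_ lt_jk); rewrite ffunE.
Qed.

Lemma first_hit_label1 (w : {ffun 'I_1 -> V}) i :
  first_hit_label Vtrain lab w i = (w ord0 \in Vtrain) && (lab (w ord0) == i).
Proof.
case: (boolP (w ord0 \in Vtrain)) => [|w0_test]; first exact: first_hit_label_train.
by apply/existsP => -[k /and3P [k_train _ _]]; rewrite (ord1 k) (negbTE w0_test) in k_train.
Qed.

Definition first_hit_last k (w : {ffun 'I_k.+1 -> V}) (i : 'I_K) : bool :=
  [&& [forall j : 'I_k.+1, (j < k)%N ==> (w j \notin Vtrain)],
      w ord_max \in Vtrain & lab (w ord_max) == i].

Lemma first_hit_last1 (w : {ffun 'I_1 -> V}) i :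
  first_hit_last w i = (w ord0 \in Vtrain) && (lab (w ord0) == i).
Proof.
rewrite /first_hit_last (ord1 ord_max).
by have -> // : [forall j : 'I_1, (j < 0)%N ==> (w j \notin Vtrain)] by apply/forallP.
Qed.

Lemma first_hit_lastS k (w : {ffun 'I_k.+2 -> V}) i :
  first_hit_last w i = (w ord0 \notin Vtrain) && first_hit_last (fbehead w) i.
Proof.
rewrite /first_hit_last (_ : ord_max = lift ord0 ord_max); last exact: val_inj.
rewrite !ffunE [RHS]andbA; congr andb.
apply/forallP/andP => [before|[w0_test /forallP before] j].
  split; first exact: before ord0.
  by apply/forallP => j; rewrite ffunE; move: (before (lift ord0 j)); rewrite !lift0 ltnS.
case: (unliftP ord0 j) => [j'|] -> //.
by move: (before j'); rewrite ffunE !lift0 ltnS.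
Qed.

End FirstHit.

Section WalkSums.
Variables (R : realType) (V : finType) (adj : rel V).
Variables (K : nat) (Vtrain : {set V}) (lab : V -> 'I_K).

Lemma trans_ge0 u w : 0 <= trans R adj u w.
Proof. by rewrite /trans; case: ifP. Qed.

Lemma walk_prob_ge0 l (w : {ffun 'I_l.+1 -> V}) : 0 <= walk_prob R adj w.
Proof. by apply: prodr_ge0 => j _; exact: trans_ge0. Qed.

Lemma walk_probS l (w : {ffun 'I_l.+2 -> V}) :
  walk_prob R adj w =
  trans R adj (w ord0) (w (lift ord0 ord0)) * walk_prob R adj (fbehead w).
Proof.
rewrite /walk_prob big_ord_recl; congr (trans _ _ (w _) _ * _); first exact: val_inj.
by apply: eq_bigr => j _; rewrite !ffunE; congr (trans _ _ (w _) _); exact: val_inj.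
Qed.

Lemma sum_transE v (f : V -> R) :
  \sum_u trans R adj v u * f u = (#|nbrs adj v|%:R)^-1 * \sum_(u in nbrs adj v) f u.
Proof.
rewrite mulr_sumr [RHS]big_mkcond; apply: eq_bigr => u _.
by rewrite /trans inE; case: (adj v u); rewrite ?mul0r.
Qed.

Lemma big_walk1 v (Q : pred {ffun 'I_1 -> V}) :
  \sum_(w : {ffun 'I_1 -> V} | (w ord0 == v) && Q w) walk_prob R adj w =
  (Q (fcons v [ffun => v]))%:R.
Proof.
rewrite big_mkcond big_ffunS (bigD1 v) //= [X in _ + X]big1 ?addr0 => [|a /negbTE neq_av].
  by rewrite (big_ffun0 _ [ffun => v]) fcons0 eqxx /walk_prob big_ord0; case: (Q _).
by apply: big1 => t _; rewrite fcons0 neq_av.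
Qed.

Lemma big_walk_first_step n v (Q : pred {ffun 'I_n.+2 -> V}) :
  \sum_(w : {ffun 'I_n.+2 -> V} | (w ord0 == v) && Q w) walk_prob R adj w =
  \sum_u trans R adj v u *
     \sum_(t : {ffun 'I_n.+1 -> V} | (t ord0 == u) && Q (fcons v t)) walk_prob R adj t.
Proof.
rewrite big_mkcond big_ffunS (bigD1 v) //= [X in _ + X]big1 ?addr0; last first.
  by move=> a /negbTE neq_av; apply: big1 => t _; rewrite fcons0 neq_av.
under eq_bigr do rewrite fcons0 eqxx walk_probS fcons_lift fcons0 fconsK.
rewrite -big_mkcond (partition_big (fun t : {ffun _ -> V} => t ord0) xpredT) //=.
apply: eq_bigr => u _; rewrite mulr_sumr.
by apply: eq_big => [t|t /andP [_ /eqP ->]] //; rewrite andbC.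
Qed.

Definition walk_mass n (u : V) : R :=
  \sum_(t : {ffun 'I_n.+1 -> V} | t ord0 == u) walk_prob R adj t.

Lemma walk_mass0 u : walk_mass 0 u = 1.
Proof.
rewrite /walk_mass (eq_bigl (fun t : {ffun _ -> V} => (t ord0 == u) && xpredT t)) ?big_walk1 //.
by move=> t; rewrite andbT.
Qed.

Lemma walk_massS n v : walk_mass n.+1 v = \sum_u trans R adj v u * walk_mass n u.
Proof.
rewrite /walk_mass (eq_bigl (fun t : {ffun _ -> V} => (t ord0 == v) && xpredT t)).
  by rewrite big_walk_first_step; under eq_bigr do under eq_bigl do rewrite andbT.
by move=> t; rewrite andbT.
Qed.

Local Notation p := (p_hit R adj Vtrain lab).
Local Notation hit := (hit_exactly R adj Vtrain lab).

Lemma p_hit_ge0 l v i : 0 <= p l v i.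
Proof. by apply: sumr_ge0 => w _; exact: walk_prob_ge0. Qed.

Lemma hit_exactly_ge0 l v i : 0 <= hit l v i.
Proof. by apply: sumr_ge0 => w _; exact: walk_prob_ge0. Qed.

Lemma p_hit0 v i : p 0 v i = ((v \in Vtrain) && (lab v == i))%:R.
Proof. by rewrite /p_hit big_walk1 first_hit_label1 fcons0. Qed.

Lemma p_hitS l v i : p l.+1 v i =
  if v \in Vtrain then (lab v == i)%:R * walk_mass l.+1 v
  else \sum_u trans R adj v u * p l u i.
Proof.
rewrite /p_hit big_walk_first_step; case: ifPn => v_train.
  have label_v t : first_hit_label Vtrain lab (fcons v t) i = (lab v == i).
    by rewrite first_hit_label_train; rewrite fcons0.
  rewrite walk_massS mulr_sumr; apply: eq_bigr => u _; rewrite mulrCA; congr (_ * _).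
  under eq_bigl do rewrite label_v.
  case: (lab v == i); rewrite ?mul1r ?mul0r; first by under eq_bigl do rewrite andbT.
  by rewrite big_pred0 // => t; rewrite andbF.
apply: eq_bigr => u _; congr (_ * _); apply: eq_bigl => t.
by rewrite first_hit_label_behead; rewrite ?fconsK ?fcons0.
Qed.

Lemma hit_exactly0 v i : hit 0 v i = ((v \in Vtrain) && (lab v == i))%:R.
Proof.
rewrite /hit_exactly.
rewrite (eq_bigl (fun w : {ffun _ -> V} => (w ord0 == v) && first_hit_last Vtrain lab w i)) //.
by rewrite big_walk1 first_hit_last1 fcons0.
Qed.

Lemma hit_exactlyS k v i : hit k.+1 v i =
  if v \in Vtrain then 0 else \sum_u trans R adj v u * hit k u i.
Proof.
rewrite /hit_exactly.
rewrite (eq_bigl (fun w : {ffun _ -> V} => (w ord0 == v) && first_hit_last Vtrain lab w i)) //.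
rewrite big_walk_first_step; case: ifP => v_train.
  apply: big1 => u _; rewrite big_pred0 ?mulr0 // => t.
  by rewrite first_hit_lastS fcons0 v_train andbF.
apply: eq_bigr => u _; congr (_ * _); apply: eq_bigl => t.
by rewrite first_hit_lastS fcons0 v_train fconsK.
Qed.

End WalkSums.

Section StochasticWalk.
Variables (R : realType) (V : finType) (adj : rel V).
Variables (K : nat) (Vtrain : {set V}) (lab : V -> 'I_K).
Hypothesis nbrs_gt0 : forall v, (0 < #|nbrs adj v|)%N.

Local Notation p := (p_hit R adj Vtrain lab).
Local Notation hit := (hit_exactly R adj Vtrain lab).

Lemma sum_trans1 v : \sum_u trans R adj v u = 1.
Proof.
under eq_bigr do rewrite -[trans _ _ _ _]mulr1.
by rewrite sum_transE sumr_const -mulr_natr mul1r mulVf // pnatr_eq0 -lt0n.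
Qed.

Lemma walk_mass1 n u : walk_mass R adj n u = 1.
Proof.
elim: n u => [|n IHn] u; first exact: walk_mass0.
by rewrite walk_massS; under eq_bigr do rewrite IHn mulr1; rewrite sum_trans1.
Qed.

Lemma p_hit_train l v i : v \in Vtrain -> p l v i = (lab v == i)%:R.
Proof. by case: l => [|l] v_train; rewrite ?p_hit0 ?p_hitS v_train ?walk_mass1 ?mulr1. Qed.

Lemma p_hitS_test l v i :
  v \notin Vtrain -> p l.+1 v i = \sum_u trans R adj v u * p l u i.
Proof. by move=> v_test; rewrite p_hitS (negbTE v_test). Qed.

Lemma p_hit_le1 l v i : p l v i <= 1.
Proof.
elim: l v => [|l IHl] v; first by rewrite p_hit0; case: (_ && _).
case: (boolP (v \in Vtrain)) => [v_train|v_test].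
  by rewrite p_hit_train //; case: (_ == _).
rewrite p_hitS_test // -(sum_trans1 v); apply: ler_sum => u _.
by rewrite ler_piMr ?trans_ge0.
Qed.

Lemma p_hit_partial_sum n v i : p n v i = \sum_(0 <= k < n.+1) hit k v i.
Proof.
elim: n v => [|n IHn] v; first by rewrite big_nat1 p_hit0 hit_exactly0.
rewrite big_nat_recl // hit_exactly0.
case: (boolP (v \in Vtrain)) => [v_train|v_test] /=.
  by rewrite p_hit_train // big1 ?addr0 // => k _; rewrite hit_exactlyS v_train.
rewrite add0r p_hitS_test // (eq_bigr _ (fun u _ => congr1 _ (IHn u))).
under eq_bigr do rewrite mulr_sumr.
by rewrite exchange_big; apply: eq_bigr => k _; rewrite hit_exactlyS (negbTE v_test).
Qed.

Lemma p_hit_cvg v i :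
  ((fun n => p n v i) @ \oo --> lp_output R adj Vtrain lab v i)%classic.
Proof.
set u := fun k => hit k v i.
have p_series n : p n v i = series u n.+1 by rewrite p_hit_partial_sum seriesEnat.
have series_nd : {homo series u : n m / (n <= m)%N >-> n <= m}.
  by apply/nondecreasing_seqP => n; rewrite seriesSr lerDl hit_exactly_ge0.
have series_ub : has_ubound (range (series u)).
  exists 1 => _ [n _ <-]; apply: le_trans (series_nd _ _ (leqnSn n)) _.
  by rewrite -p_series p_hit_le1.
rewrite (funext p_series) /lp_output -/u (cvg_shiftS (series u)).
exact: nondecreasing_is_cvgn.
Qed.

End StochasticWalk.

Lemma simple_connected_nbrs_gt0 (V : finType) (adj : rel V) :
  simple_connected_graph adj -> forall v, (0 < #|nbrs adj v|)%N.
Proof.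
case=> _ _ conn V_gt1 v.
have : (0 < #|predC1 v|)%N by rewrite cardC1; case: #|V| V_gt1 => [|[|]].
case/card_gt0P => u; rewrite !inE => neq_uv.
case/connectP: (conn v u) => -[/= _ eq_uv|w s /= /andP [adj_vw _] _].
  by rewrite eq_uv eqxx in neq_uv.
by apply/card_gt0P; exists w; rewrite inE.
Qed.

Lemma mulmx_rshift (R : pzSemiRingType) m k n q (A : 'M[R]_(m + k, n))
    (B : 'M[R]_(n, q)) j c :
  (A *m B) (rshift m j) c = (dsubmx A *m B) j c.
Proof. by rewrite mul_dsub_mx [RHS]mxE. Qed.

Lemma mul_row0_1mx (R : pzSemiRingType) a b q (B : 'M[R]_(a + b, q)) j c :
  (row_mx 0 1%:M *m B) j c = B (rshift a j) c.
Proof. by rewrite -{1}(vsubmxK B) mul_row_col mul0mx mul1mx add0r mxE. Qed.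

Lemma mulmx_selectE (R : pzSemiRingType) k n q (U : 'M[R]_(k, n))
    (f : 'I_k -> 'I_n) (B : 'M[R]_(n, q)) :
  (forall i j, U i j = (j == f i)%:R) -> forall i c, (U *m B) i c = B (f i) c.
Proof.
move=> U_sel i c; rewrite mxE (bigD1 (f i)) //= U_sel eqxx mul1r.
by rewrite big1 ?addr0 // => j /negbTE neq_j; rewrite U_sel neq_j mul0r.
Qed.

Lemma softmax_le (R : realType) n (z : 'cV[R]_n) i j :
  (softmax z j 0 <= softmax z i 0) = (z j 0 <= z i 0).
Proof.
rewrite !mxE ler_pM2r ?ler_expR // invr_gt0 (bigD1 i) //=.
have := expR_gt0 (z i 0).
have : 0 <= \sum_(k | k != i) expR (z k 0) by apply: sumr_ge0 => k _; exact: expR_ge0.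
lra.
Qed.

Section TFGNNLabelBlock.
Variables (R : realType) (V : finType) (adj : rel V).
Variables (K : nat) (Vtrain : {set V}) (lab : V -> 'I_K).
Variables (e : nat -> nat) (x : V -> 'cV[R]_(e 0%N))
  (S Vw T W : forall l : nat, 'M[R]_(e l.+1 + (1 + K), e l + (1 + K))).
Hypothesis nbrs_gt0 : forall v, (0 < #|nbrs adj v|)%N.
Hypotheses (S_id : forall l, dsubmx (S l) = row_mx 0 1%:M)
  (Vw_0 : forall l, dsubmx (Vw l) = 0) (T_0 : forall l, dsubmx (T l) = 0)
  (W_id : forall l, dsubmx (W l) = row_mx 0 1%:M).

Lemma mean_nbr_trans p q (M : 'M[R]_(p, q)) h v r c :
  mean_nbr adj M h v r c = \sum_u trans R adj v u * (M *m h u) r c.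
Proof. by rewrite /mean_nbr sum_transE mxE summxE. Qed.

Lemma tfgnn_label_block l v i :
  tfgnn adj Vtrain lab x S Vw T W l v (rshift (e l) (rshift 1 i)) 0 =
  p_hit R adj Vtrain lab l v i.
Proof.
elim: l v => [|l IHl] v.
  rewrite /= col_mxEd /label_feat p_hit0; case: (v \in Vtrain); last by rewrite mxE.
  by rewrite col_mxEd mxE eq_sym.
rewrite /= /relu mxE -[RHS](@max_idPl _ _ _ 0 _) ?p_hit_ge0 //; congr Num.max.
case: ifPn => [v_train|v_test]; rewrite mxE mean_nbr_trans mulmx_rshift.
  rewrite S_id mul_row0_1mx IHl (p_hit_train _ _ nbrs_gt0) // p_hit_train //.
  by rewrite big1 ?addr0 // => u _; rewrite mulmx_rshift Vw_0 mul0mx mxE mulr0.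
rewrite T_0 mul0mx mxE add0r p_hitS_test //.
by apply: eq_bigr => u _; rewrite mulmx_rshift W_id mul_row0_1mx IHl.
Qed.

End TFGNNLabelBlock.

Theorem proposition2 (R : realType) (V : finType) (adj : rel V)
  (K : nat) (Vtrain : {set V}) (lab : V -> 'I_K)
  (e : nat -> nat) (x : V -> 'cV[R]_(e 0%N))
  (S Vw T W : forall l : nat, 'M[R]_(e l.+1 + (1 + K), e l + (1 + K)))
  (L : nat) (U : 'M[R]_(K, e L + (1 + K))) :
  simple_connected_graph adj ->
  (0 < #|Vtrain|)%N ->
  (forall l, dsubmx (S l) = row_mx 0 1%:M) ->
  (forall l, dsubmx (Vw l) = 0) ->
  (forall l, dsubmx (T l) = 0) ->
  (forall l, dsubmx (W l) = row_mx 0 1%:M) ->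
  (forall (i : 'I_K) (j : 'I_(e L + (1 + K))),
      U i j = ((j : nat) == e L + 1 + i)%N%:R) ->
  let h := tfgnn adj Vtrain lab x S Vw T W in
  let p := p_hit R adj Vtrain lab in
  [/\ (forall (v : V) (i : 'I_K), h L v (rshift (e L) (rshift 1 i)) 0 = p L v i),
      (forall (v : V) (i : 'I_K),
         (forall j, softmax (U *m h L v) j 0 <= softmax (U *m h L v) i 0) <->
         (forall j, p L v j <= p L v i)) &
      (forall v : V, v \notin Vtrain -> forall i : 'I_K,
         ((fun n => p n v i) @ \oo --> lp_output R adj Vtrain lab v i)%classic)].
Proof.
move=> G _ S_id Vw_0 T_0 W_id U_sel h p.
have nbrs_gt0 := simple_connected_nbrs_gt0 G.
have block := tfgnn_label_block Vtrain lab x nbrs_gt0 S_id Vw_0 T_0 W_id L.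
have readout v i : (U *m h L v) i 0 = p L v i.
  rewrite (@mulmx_selectE _ _ _ _ _ (fun i => rshift (e L) (rshift 1 i))) ?block //.
  by move=> i' j; rewrite U_sel -(addnA (e L) 1 i').
split=> [//|v i|v _ i]; last exact: p_hit_cvg.
by split=> le_i j; move: (le_i j); rewrite softmax_le !readout.
Qed.
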